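(* Let $G$ and $H$ be finite abelian groups, written additively, of the same even order $k$, and let $f:G\to H$ be semi-planar. Suppose $S(G,H;f)$ splits into two substructures $S_1$ and $S_2$ with $\mathcal{L}(0,0)\in S_1$, and let $B=\{b\in H : \mathcal{L}(0,b)\in S_1\}$ (a subgroup of $H$ of index $2$). Then for any $h\in H\setminus B$, the mapping $\phi_h:G\times H\to G\times H$, $\phi_h(x,y)=(x,y+h)$ (together with the induced map on lines $\mathcal{L}(a,b)\mapsto\mathcal{L}(a,b+h)$), is an isomorphism between the two substructures $S_1$ and $S_2$.
   Context: A function $f:G\to H$ is semi-planar if for every non-identity $a\in G$ and every $y\in H$, the equation $f(x+a)-f(x)=y$ has either $0$ or $2$ solutions $x\in G$. The incidence structure $S(G,H;f)$ has points $(x,y)\in G\times H$ and lines $\mathcal{L}(a,b)$ for $(a,b)\in G\times H$, with $(x,y)$ incident with $\mathcal{L}(a,b)$ iff $y=f(x-a)+b$. Its incidence graph is the bipartite graph on points and lines with an edge for each incident pair. $S(G,H;f)$ splits into two substructures $S_1,S_2$ if its incidence graph has exactly two connected components; $S_1,S_2$ are the incidence structures formed by the points and lines of the two components, and $\mathcal{L}(a,b)\in S_i$ means the line lies in component $S_i$. *)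

From HB Require Import structures.
From mathcomp Require Import all_boot all_order all_algebra.
Set Implicit Arguments. Unset Strict Implicit. Unset Printing Implicit Defensive.
Import GRing.Theory.
Local Open Scope ring_scope.

Definition semi_planar (G H : finZmodType) (f : G -> H) : Prop :=
  forall (a : G) (y : H), a != 0 ->
    let n := #|[set x : G | f (x + a) - f x == y]| in (n = 0%N \/ n = 2%N).

(* Incidence in S(G,H;f): point (x,y) on line L(a,b) iff y = f(x-a) + b. *)
Definition incident (G H : finZmodType) (f : G -> H) (p l : G * H) : bool :=
  p.2 == f (p.1 - l.1) + l.2.

(* Vertices of the incidence graph: inl p = point p, inr l = line L(l). *)
Definition ivert (G H : finZmodType) : finType := ((G * H) + (G * H))%type.

Definition iadj (G H : finZmodType) (f : G -> H) : rel (ivert G H) :=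
  fun u v => match u, v with
             | inl p, inr l => incident f p l
             | inr l, inl p => incident f p l
             | _, _ => false
             end.

Definition icomp (G H : finZmodType) (f : G -> H) (v : ivert G H) : {set ivert G H} :=
  [set w | connect (iadj f) v w].

(* S(G,H;f) splits into two substructures: the incidence graph has exactly
   two connected components. *)
Definition splits_in_two (G H : finZmodType) (f : G -> H) : Prop :=
  #|[set icomp f v | v : ivert G H]| = 2%N.

Definition S1 (G H : finZmodType) (f : G -> H) : {set ivert G H} :=
  icomp f (inr (0, 0)).
Definition S2 (G H : finZmodType) (f : G -> H) : {set ivert G H} :=
  ~: S1 f.

Definition Bset (G H : finZmodType) (f : G -> H) : {set H} :=
  [set b : H | (inr (0, b) : ivert G H) \in S1 f].

Definition phi (G H : finZmodType) (h : H) (v : ivert G H) : ivert G H :=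
  match v with
  | inl p => inl (p.1, p.2 + h)
  | inr l => inr (l.1, l.2 + h)
  end.

From HB Require Import structures.
From mathcomp Require Import all_boot all_order all_algebra.
Set Implicit Arguments. Unset Strict Implicit. Unset Printing Implicit Defensive.
Import GRing.Theory.
Local Open Scope ring_scope.

(* The translation (x, y) |-> (x, y + h) preserves incidence, so it is an
   automorphism of the incidence graph and permutes its connected components.
   It sends the component S_1 of L(0,0) to the component of L(0,h), which is
   not S_1 because h is not in B; with only two components, that is S_2. *)

Section GraphComponents.

Variables (T : finType) (e : rel T).

Lemma connect_homo (g : T -> T) :
  {homo g : x y / e x y} -> {homo g : x y / connect e x y}.
Proof.
move=> e_g x _ /connectP[p + ->]; elim: p x => [|y p IHp] x /=.
  by rewrite connect0.
by case/andP=> /e_g exy /IHp; apply: connect_trans (connect1 exy).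
Qed.

Lemma connect_bij (g : T -> T) :
  bijective g -> {mono g : x y / e x y} -> {mono g : x y / connect e x y}.
Proof.
case=> g' gK g'K e_g x y; apply/idP/idP; last first.
  by apply: connect_homo => u v; rewrite e_g.
have e_g' : {homo g' : u v / e u v} by move=> u v; rewrite -[e (g' u) _]e_g !g'K.
by move/(@connect_homo g' e_g'); rewrite !gK.
Qed.

Lemma connect_two_components (u w : T) :
  symmetric e -> #|[set [set y | connect e x y] | x : T]| = 2 ->
  ~~ connect e u w -> forall v, connect e w v = ~~ connect e u v.
Proof.
move=> e_sym two_comps uw v; have csym := sym_connect_sym e_sym.
pose comp x := [set y | connect e x y].
have comp_self x : x \in comp x by rewrite inE connect0.
have comp_uw : comp u != comp w.
  by apply: contraNneq uw => Euw; have := comp_self w; rewrite -Euw inE.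
have comps : [set comp u; comp w] = [set comp x | x : T].
  apply/eqP; rewrite eqEcard cards2 comp_uw two_comps andbT.
  by apply/subsetP => X; rewrite !inE => /orP[]/eqP->; apply: imset_f.
have : comp v \in [set comp u; comp w] by rewrite comps imset_f.
rewrite !inE => /orP[]/eqP Ev; move: (comp_self v); rewrite Ev inE => Hv.
  rewrite Hv; apply: contraNF uw => wv.
  by apply: connect_trans Hv _; rewrite csym.
rewrite Hv; apply/esym; apply: contra uw => uv.
by apply: connect_trans uv _; rewrite csym.
Qed.

End GraphComponents.

Section Translation.

Variables (G H : finZmodType) (f : G -> H).

Lemma incident_translate (h : H) (p l : G * H) :
  incident f p l = incident f (p.1, p.2 + h) (l.1, l.2 + h).
Proof. by rewrite /incident /= addrA (inj_eq (addIr h)). Qed.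

Lemma iadj_sym : symmetric (iadj f).
Proof. by case=> [p|l] [q|m]. Qed.

Lemma iadj_phi (h : H) : {mono phi h : u v / iadj f u v}.
Proof. by case=> [p|l] [q|m] //=; rewrite [RHS](incident_translate h). Qed.

Lemma phiK (h : H) : cancel (phi (G:=G) h) (phi (- h)).
Proof. by case=> [[x y]|[a b]] /=; rewrite addrK. Qed.

Lemma phi_bij (h : H) : bijective (phi (G:=G) h).
Proof. by exists (phi (- h)); [apply: phiK | rewrite -{2}[h]opprK; apply: phiK]. Qed.

End Translation.

Theorem corollary1 (G H : finZmodType) (k : nat) (f : G -> H) (h : H) :
  #|G| = k -> #|H| = k -> ~~ odd k ->
  semi_planar f ->
  splits_in_two f ->
  h \notin Bset f ->
  [/\ bijective (phi (G:=G) h),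
      (forall v : ivert G H, (v \in S1 f) = (phi h v \in S2 f)),
      (forall p l : G * H,
          incident f p l = incident f (p.1, p.2 + h) (l.1, l.2 + h)) &
      (forall u v : ivert G H, iadj f u v = iadj f (phi h u) (phi h v))].
Proof.
move=> _ _ _ _ two_comps hB.
have not_S1 : ~~ connect (iadj f) (inr (0, 0)) (inr (0, h)).
  by move: hB; rewrite !inE.
split=> [||p l|u v]; [exact: phi_bij | | exact: incident_translate |].
- move=> v; rewrite !inE -(connect_bij (phi_bij _ h) (iadj_phi f h)) /=.
  by rewrite add0r (connect_two_components (iadj_sym f) two_comps not_S1).
- by rewrite iadj_phi.
Qed.
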